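(* Suppose $(\mathcal E,W)$ is a product system and $u$ is a normalized unit of $\mathcal E$. Let $\mathcal F_t=\mathbb Cu_t$ and let $\mathcal F'_t=\mathcal E_t\ominus\tilde{\mathcal F}_t$, where $\tilde{\mathcal F}_t=\overline{\mathrm{span}}\{x\otimes y:x\in\mathcal E_r,\ \langle x,u_r\rangle=0,\ y\in\mathcal E_{t-r},\ \langle y,u_{t-r}\rangle=0,\ \text{for some }0<r<t\}$. Then, for all $s,t>0$, $u_s\otimes\mathcal F'_t\subset\mathcal F'_{s+t}$ and $\mathcal F'_s\otimes u_t\subset\mathcal F'_{s+t}$ (under the identification $\mathcal E_{s+t}\cong\mathcal E_s\otimes\mathcal E_t$ given by $W$).
   Context: A product system is a measurable family of separable Hilbert spaces $(\mathcal E_t)_{t>0}$ with associative unitaries $W_{s,t}:\mathcal E_{s+t}\to\mathcal E_s\otimes\mathcal E_t$, used to identify $\mathcal E_{s+t}$ with $\mathcal E_s\otimes\mathcal E_t$. A normalized unit is a measurable section $(u_t)$ with $\|u_t\|=1$ and $u_{s+t}=u_s\otimes u_t$ under these identifications. *)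

From HB Require Import structures.
From mathcomp Require Import all_boot all_order all_algebra.
From mathcomp Require Import complex.
From mathcomp Require Import reals.
Set Implicit Arguments. Unset Strict Implicit. Unset Printing Implicit Defensive.
Import Order.TTheory GRing.Theory Num.Theory.
Local Open Scope ring_scope.
Local Open Scope complex_scope.

Definition castE (I : Type) (E : I -> Type) (a b : I) (e : a = b) (x : E a) : E b :=
  eq_rect a E x b e.

Section Hilbert.
Variable R : realType.
Notation C := (R[i]).
Variable V : lmodType C.
Variable ip : V -> V -> C.

Definition is_inner_product : Prop :=
  [/\ forall (a : C) (x y z : V), ip (a *: x + y) z = a * ip x z + ip y z,
      forall x y : V, ip x y = (ip y x)^*,
      forall x : V, 0 <= ip x x
    & forall x : V, ip x x = 0 -> x = 0].

Definition dist2 (x y : V) : C := ip (x - y) (x - y).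

Definition ip_complete : Prop :=
  forall f : nat -> V,
    (forall eps : C, 0 < eps -> exists N, forall m n, (N <= m)%N -> (N <= n)%N ->
       dist2 (f m) (f n) < eps) ->
    exists x : V, forall eps : C, 0 < eps -> exists N, forall n, (N <= n)%N ->
       dist2 (f n) x < eps.

Definition in_span (S : V -> Prop) (w : V) : Prop :=
  exists n (c : 'I_n -> C) (v : 'I_n -> V),
    (forall i, S (v i)) /\ w = \sum_(i < n) c i *: v i.

Definition in_closed_span (S : V -> Prop) (w : V) : Prop :=
  forall eps : C, 0 < eps -> exists v, in_span S v /\ dist2 w v < eps.

Definition ortho_closed_span (S : V -> Prop) (z : V) : Prop :=
  forall w, in_closed_span S w -> ip w z = 0.
End Hilbert.

(* A product system: a family (E_t)_{t>0} of complex Hilbert spaces together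
   with the maps x \otimes y := W_{s,t}^{-1}(x (x) y) : E_s x E_t -> E_{s+t}.
   W_{s,t} being a unitary onto the Hilbert tensor product is encoded by:
   bilinearity, <x(x)y, x'(x)y'> = <x,x'><y,y'>, and density of the span of
   elementary tensors; associativity of W is encoded by (x(x)y)(x)z = x(x)(y(x)z). *)
Record product_system (R : realType) := ProductSystem {
  PE : R -> lmodType (R[i]);
  Pip : forall t, PE t -> PE t -> R[i];
  Ptens : forall s t, PE s -> PE t -> PE (s + t);
  Pip_inner : forall t : R, 0 < t -> is_inner_product (@Pip t);
  Pcomplete : forall t : R, 0 < t -> ip_complete (@Pip t);
  Ptens_linl : forall s t : R, 0 < s -> 0 < t -> forall (a : R[i]) (x x' : PE s) (y : PE t),
     Ptens (a *: x + x') y = a *: Ptens x y + Ptens x' y;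
  Ptens_linr : forall s t : R, 0 < s -> 0 < t -> forall (a : R[i]) (x : PE s) (y y' : PE t),
     Ptens x (a *: y + y') = a *: Ptens x y + Ptens x y';
  Ptens_ip : forall s t : R, 0 < s -> 0 < t -> forall (x x' : PE s) (y y' : PE t),
     Pip (Ptens x y) (Ptens x' y') = Pip x x' * Pip y y';
  Ptens_dense : forall s t : R, 0 < s -> 0 < t -> forall w : PE (s + t),
     in_closed_span (@Pip (s + t)) (fun v => exists x y, v = Ptens x y) w;
  Ptens_assoc : forall r s t : R, 0 < r -> 0 < s -> 0 < t ->
     forall (x : PE r) (y : PE s) (z : PE t),
     @castE R PE _ _ (addrA r s t) (Ptens x (Ptens y z)) = Ptens (Ptens x y) z
}.

(* normalized unit (measurability omitted) *)
Definition normalized_unit (R : realType) (P : product_system R)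
    (u : forall t, PE P t) : Prop :=
  (forall t : R, 0 < t -> Pip (u t) (u t) = 1) /\
  (forall s t : R, 0 < s -> 0 < t -> u (s + t) = Ptens (u s) (u t)).

(* generating set of \tilde F_t : x (x) y with x in E_r, y in E_{t-r}, 0<r<t,
   x _|_ u_r, y _|_ u_{t-r} (written with t' := t - r, e : r + t' = t). *)
Definition Ftilde_gen (R : realType) (P : product_system R)
    (u : forall t, PE P t) (t : R) (w : PE P t) : Prop :=
  exists (r t' : R) (e : r + t' = t) (x : PE P r) (y : PE P t'),
    [/\ 0 < r, 0 < t', Pip x (u r) = 0, Pip y (u t') = 0
      & w = @castE R (PE P) _ _ e (Ptens x y)].

Definition Fprime (R : realType) (P : product_system R)
    (u : forall t, PE P t) (t : R) (z : PE P t) : Prop :=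
  ortho_closed_span (@Pip R P t) (@Ftilde_gen R P u t) z.
Arguments Fprime {R P} u t z.
Arguments Ftilde_gen {R P} u t w.

(** Let [z] be in [F'_t] and let [w = x (x) y] be a generator of
    [\tilde F_(s+t)] split at [r], so [x] is orthogonal to [u_r] and [y] to
    [u_(s+t-r)].  If [r <= s], then [<w, u_s (x) z>] carries the factor
    [<x, u_r> = 0] (for [r < s] after writing [u_s = u_r (x) u_(s-r)]).  If
    [r = s + d > s], then [<x' (x) y, u_s (x) z> = <x', u_(s+d)> <u_d (x) y, z>]
    for every [x'] in [E_(s+d)]: both sides are bounded linear in [x'],
    elementary tensors are dense, and for [x' = a (x) b] the identity reduces
    to [<b (x) y, z> = <b, u_d> <u_d (x) y, z>], which holds because
    [(b - <b, u_d> u_d) (x) y] generates [\tilde F_(d+t-r)] and is therefore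
    orthogonal to [z].  Taking [x' = x] gives [0].  The inclusion for
    [F'_s (x) u_t] is the mirror image. *)
From HB Require Import structures.
From mathcomp Require Import all_boot all_order all_algebra.
From mathcomp Require Import complex reals ring.
Import Order.TTheory GRing.Theory Num.Theory.
Local Open Scope ring_scope.
Set Implicit Arguments. Unset Strict Implicit.
Set Bullet Behavior "Strict Subproofs".

Section InnerProductSpace.
Variable R : realType.
Local Notation C := (R[i]).
Variable V : lmodType C.
Variable ip : V -> V -> C.
Hypothesis hip : is_inner_product ip.

Lemma ipDZl a x y z : ip (a *: x + y) z = a * ip x z + ip y z.
Proof. by case: hip. Qed.

Lemma ipC x y : ip x y = (ip y x)^*.
Proof. by case: hip. Qed.

Lemma ip_ge0 x : 0 <= ip x x.
Proof. by case: hip. Qed.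

Lemma ip0l z : ip 0 z = 0.
Proof. by have := ipDZl (-1) z z z; rewrite scaleN1r addNr mulN1r addNr. Qed.

Lemma ipZl a x z : ip (a *: x) z = a * ip x z.
Proof. by have := ipDZl a x 0 z; rewrite addr0 ip0l addr0. Qed.

Lemma ipBl x y z : ip (x - y) z = ip x z - ip y z.
Proof. by rewrite addrC -scaleN1r ipDZl mulN1r addrC. Qed.

Lemma ipZr a x z : ip x (a *: z) = a^* * ip x z.
Proof. by rewrite ipC ipZl rmorphM /= -ipC. Qed.

Lemma ipBr x y z : ip x (y - z) = ip x y - ip x z.
Proof. by rewrite ipC ipBl rmorphB /= -!ipC. Qed.

(* Cauchy-Schwarz in a form that needs no division by [ip z z]: expand
   [0 <= ip (c a - k z) (c a - k z)] with [c = 1 + ip z z], [k = ip a z]. *)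
Lemma ip_norm_bound a z : `|ip a z| ^+ 2 <= (1 + ip z z) * ip a a.
Proof.
set c := 1 + ip z z; set k := ip a z.
have c_gt0 : 0 < c by apply: ltr_wpDr; [exact: ip_ge0 | exact: ltr01].
have c_real : c^* = c by rewrite rmorphD rmorph1 /= -ipC.
have expand := ip_ge0 (c *: a - k *: z).
rewrite !ipBl !ipZl !ipBr !ipZr c_real [ip z a]ipC -/k in expand.
rewrite -(ler_pM2r c_gt0) -subr_ge0.
have -> : c * ip a a * c - `|k| ^+ 2 * c =
    (c * (c * ip a a - k^* * k) - k * (c * k^* - k^* * ip z z)) + `|k| ^+ 2.
  by rewrite normCK /c; ring.
by rewrite addr_ge0 // exprn_ge0.
Qed.

Lemma sqr_normD_le (p q : C) : `|p + q| ^+ 2 <= 2 * `|p| ^+ 2 + 2 * `|q| ^+ 2.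
Proof.
rewrite -subr_ge0.
have -> : 2 * `|p| ^+ 2 + 2 * `|q| ^+ 2 - `|p + q| ^+ 2 = `|p - q| ^+ 2.
  by rewrite !normCK !rmorphD rmorphN /=; ring.
exact: exprn_ge0.
Qed.

Definition linear_functional (f : V -> C) :=
  forall a x y, f (a *: x + y) = a * f x + f y.

Definition bounded_functional (f : V -> C) :=
  exists2 M, 0 <= M & forall x, `|f x| ^+ 2 <= M * ip x x.

Section LinearFunctional.
Variable f : V -> C.
Hypothesis f_lin : linear_functional f.

Lemma lf0 : f 0 = 0.
Proof. by have := f_lin (-1) 0 0; rewrite scaleN1r oppr0 addr0 mulN1r addNr. Qed.

Lemma lfZ a x : f (a *: x) = a * f x.
Proof. by have := f_lin a x 0; rewrite addr0 lf0 addr0. Qed.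

Lemma lfD x y : f (x + y) = f x + f y.
Proof. by have := f_lin 1 x y; rewrite scale1r mul1r. Qed.

Lemma lfB x y : f (x - y) = f x - f y.
Proof. by rewrite lfD -scaleN1r lfZ mulN1r. Qed.

End LinearFunctional.

Lemma linear_functional_ip z : linear_functional (ip^~ z).
Proof. by move=> a x y; rewrite ipDZl. Qed.

Lemma bounded_functional_ip z : bounded_functional (ip^~ z).
Proof.
exists (1 + ip z z); last by move=> x; apply: ip_norm_bound.
by rewrite addr_ge0 ?ler01 ?ip_ge0.
Qed.

Lemma linear_functional_sub f g k :
  linear_functional f -> linear_functional g ->
  linear_functional (fun x => f x - k * g x).
Proof. by move=> hf hg a x y; rewrite hf hg; ring. Qed.

Lemma bounded_functional_sub f g k :
  bounded_functional f -> bounded_functional g ->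
  bounded_functional (fun x => f x - k * g x).
Proof.
move=> [Mf Mf_ge0 hf] [Mg Mg_ge0 hg].
exists (2 * Mf + 2 * (`|k| ^+ 2 * Mg)).
  by rewrite addr_ge0 ?mulr_ge0 ?exprn_ge0.
move=> x; apply: le_trans (sqr_normD_le _ _) _.
have -> : (2 * Mf + 2 * (`|k| ^+ 2 * Mg)) * ip x x =
    2 * (Mf * ip x x) + 2 * (`|k| ^+ 2 * (Mg * ip x x)) by ring.
rewrite normrN normrM exprMn.
by apply: lerD; rewrite ler_wpM2l ?ler_wpM2l ?exprn_ge0.
Qed.

Lemma span_vanish (S : V -> Prop) f :
  linear_functional f -> (forall v, S v -> f v = 0) ->
  forall w, in_span S w -> f w = 0.
Proof.
move=> f_lin fS _ [n [c [v [hv ->]]]].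
apply: (big_ind (fun x => f x = 0)) => [|x y fx0 fy0|i _].
- exact: lf0.
- by rewrite lfD // fx0 fy0 addr0.
- by rewrite lfZ // fS // mulr0.
Qed.

Lemma closed_span_vanish (S : V -> Prop) f :
  linear_functional f -> bounded_functional f -> (forall v, S v -> f v = 0) ->
  forall w, in_closed_span ip S w -> f w = 0.
Proof.
move=> f_lin [M M_ge0 f_bnd] fS w hw.
apply/eqP; apply: contraT => fw_neq0.
set k := `|f w| ^+ 2.
have k_gt0 : 0 < k by rewrite exprn_gt0 // normr_gt0.
have M1_gt0 : 0 < 1 + M by apply: ltr_wpDr M_ge0 ltr01.
(* Approximating [w] within [k / (1 + M)] by [v] with [f v = 0] forces
   [k = |f (w - v)|^2 <= M k / (1 + M) < k]. *)
have [v [hv w_near_v]] := hw _ (divr_gt0 k_gt0 M1_gt0).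
have fw_eq : f w = f (w - v) by rewrite lfB // (span_vanish f_lin fS hv) subr0.
have : k <= M * (k / (1 + M)).
  apply: (@le_trans _ _ (M * ip (w - v) (w - v))); first by rewrite /k fw_eq f_bnd.
  by apply: ler_wpM2l => //; apply: ltW.
rewrite mulrA ler_pdivlMr // -subr_ge0.
have -> : M * k - k * (1 + M) = - k by ring.
by rewrite oppr_ge0 => /(lt_le_trans k_gt0); rewrite ltxx.
Qed.

End InnerProductSpace.

Lemma bounded_functional_ip_comp (R : realType) (V1 V2 : lmodType R[i])
    (ip1 : V1 -> V1 -> R[i]) (ip2 : V2 -> V2 -> R[i]) (g : V1 -> V2) (k : R[i]) w :
  is_inner_product ip2 -> 0 <= k -> (forall x, ip2 (g x) (g x) = k * ip1 x x) ->
  bounded_functional ip1 (fun x => ip2 (g x) w).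
Proof.
move=> hip2 k_ge0 g_scale; exists ((1 + ip2 w w) * k).
  by rewrite mulr_ge0 // addr_ge0 ?ler01 ?(ip_ge0 hip2).
by move=> x; rewrite -mulrA -g_scale; apply: ip_norm_bound.
Qed.

Section ProductSystem.
Variable R : realType.
Variable P : product_system R.
Local Notation E := (PE P).
Local Notation cast := (@castE R E _ _).

Lemma castE_pi a b (e e' : a = b) (x : E a) : cast e x = cast e' x.
Proof. by rewrite (eq_irrelevance e e'). Qed.

Lemma castE_id a (e : a = a) (x : E a) : cast e x = x.
Proof. by rewrite (eq_irrelevance e erefl). Qed.

Lemma castE_comp a b c (e1 : a = b) (e2 : b = c) (x : E a) :
  cast e2 (cast e1 x) = cast (etrans e1 e2) x.
Proof. by case: c / e2; case: b / e1. Qed.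

Lemma ip_castEl a b (e : a = b) (x : E a) (y : E b) :
  Pip (cast e x) y = Pip x (cast (esym e) y).
Proof. by move: y; case: b / e. Qed.

Lemma ip_castE a b (e e' : a = b) (x y : E a) : Pip (cast e x) (cast e' y) = Pip x y.
Proof. by rewrite (castE_pi e' e); clear e'; case: b / e. Qed.

Lemma castE_lin a b (e : a = b) c (x y : E a) :
  cast e (c *: x + y) = c *: cast e x + cast e y.
Proof. by case: b / e. Qed.

Variable u : forall t, E t.
Hypothesis hu : normalized_unit u.

Lemma unit_ip1 t : 0 < t -> Pip (u t) (u t) = 1.
Proof. by case: hu => h _; apply: h. Qed.

Lemma unitM s t : 0 < s -> 0 < t -> u (s + t) = Ptens (u s) (u t).
Proof. by case: hu => _ h; apply: h. Qed.

Lemma ip_sub_proj_unit d (b : E d) : 0 < d -> Pip (b - Pip b (u d) *: u d) (u d) = 0.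
Proof.
by move=> hd; rewrite (ipBl (Pip_inner P hd)) (ipZl (Pip_inner P hd)) unit_ip1 ?mulr1 ?subrr.
Qed.

Lemma Fprime_ortho_gen t (z w : E t) :
  0 < t -> Fprime u t z -> Ftilde_gen u t w -> Pip w z = 0.
Proof.
move=> ht hz hw; apply: hz => eps eps_gt0; exists w; split.
  by exists 1%N, (fun _ => 1), (fun _ => w); rewrite big_ord1 scale1r.
by rewrite /dist2 subrr (ip0l (Pip_inner P ht)).
Qed.

Lemma ip_tensl_Fprime d t (b : E d) (y : E t) (z : E (d + t)) :
  0 < d -> 0 < t -> Pip y (u t) = 0 -> Fprime u (d + t) z ->
  Pip (Ptens b y) z = Pip b (u d) * Pip (Ptens (u d) y) z.
Proof.
move=> hd ht hy hz; have hdt := addr_gt0 hd ht.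
set c := Pip b (u d).
have -> : Ptens b y = c *: Ptens (u d) y + Ptens (b - c *: u d) y.
  by rewrite -Ptens_linl // [c *: u d + _]addrC subrK.
rewrite (ipDZl (Pip_inner P hdt)) (Fprime_ortho_gen (w := Ptens (b - c *: u d) y) hdt hz).
  by rewrite addr0.
by exists d, t, erefl, (b - c *: u d), y; split; rewrite ?ip_sub_proj_unit.
Qed.

Lemma ip_tensr_Fprime r d (x : E r) (b : E d) (z : E (r + d)) :
  0 < r -> 0 < d -> Pip x (u r) = 0 -> Fprime u (r + d) z ->
  Pip (Ptens x b) z = Pip b (u d) * Pip (Ptens x (u d)) z.
Proof.
move=> hr hd hx hz; have hrd := addr_gt0 hr hd.
set c := Pip b (u d).
have -> : Ptens x b = c *: Ptens x (u d) + Ptens x (b - c *: u d).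
  by rewrite -Ptens_linr // [c *: u d + _]addrC subrK.
rewrite (ipDZl (Pip_inner P hrd)) (Fprime_ortho_gen (w := Ptens x (b - c *: u d)) hrd hz).
  by rewrite addr0.
by exists r, d, erefl, x, (b - c *: u d); split; rewrite ?ip_sub_proj_unit.
Qed.

Lemma ip_tensl_unit_tens s d t (e : s + d + t = s + (d + t))
    (x : E (s + d)) (y : E t) (z : E (d + t)) :
  0 < s -> 0 < d -> 0 < t -> Pip y (u t) = 0 -> Fprime u (d + t) z ->
  Pip (cast e (Ptens x y)) (Ptens (u s) z) = Pip x (u (s + d)) * Pip (Ptens (u d) y) z.
Proof.
move=> hs hd ht hy hz.
have [hsd hdt] := (addr_gt0 hs hd, addr_gt0 hd ht).
have hsdt := addr_gt0 hs hdt.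
apply/eqP; rewrite -subr_eq0 [_ * Pip _ _]mulrC; apply/eqP.
apply: (closed_span_vanish
    (f := fun x' => Pip (cast e (Ptens x' y)) (Ptens (u s) z)
                    - Pip (Ptens (u d) y) z * Pip x' (u (s + d))) _ _ _
  (Ptens_dense hs hd x)).
- apply: linear_functional_sub (linear_functional_ip (Pip_inner P hsd) _).
  by move=> a x1 x2; rewrite Ptens_linl // castE_lin (ipDZl (Pip_inner P hsdt)).
- apply: bounded_functional_sub (bounded_functional_ip (Pip_inner P hsd) _).
  apply: (bounded_functional_ip_comp (g := fun x1 => cast e (Ptens x1 y)) (k := Pip y y)
           _ (Pip_inner P hsdt)).
    exact: ip_ge0 (Pip_inner P ht) y.
  by move=> x1; rewrite ip_castE Ptens_ip // mulrC.
- move=> _ [a [b ->]].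
  rewrite -Ptens_assoc // castE_comp castE_id !Ptens_ip // unitM // Ptens_ip //.
  by rewrite (ip_tensl_Fprime b hd ht hy hz); ring.
Qed.

Lemma ip_tensr_tens_unit r d t (e : r + (d + t) = r + d + t)
    (x : E r) (y : E (d + t)) (z : E (r + d)) :
  0 < r -> 0 < d -> 0 < t -> Pip x (u r) = 0 -> Fprime u (r + d) z ->
  Pip (cast e (Ptens x y)) (Ptens z (u t)) = Pip y (u (d + t)) * Pip (Ptens x (u d)) z.
Proof.
move=> hr hd ht hx hz.
have [hrd hdt] := (addr_gt0 hr hd, addr_gt0 hd ht).
have hrdt := addr_gt0 hrd ht.
apply/eqP; rewrite -subr_eq0 [_ * Pip _ _]mulrC; apply/eqP.
apply: (closed_span_vanish
    (f := fun y' => Pip (cast e (Ptens x y')) (Ptens z (u t))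
                    - Pip (Ptens x (u d)) z * Pip y' (u (d + t))) _ _ _
  (Ptens_dense hd ht y)).
- apply: linear_functional_sub (linear_functional_ip (Pip_inner P hdt) _).
  by move=> a y1 y2; rewrite Ptens_linr // castE_lin (ipDZl (Pip_inner P hrdt)).
- apply: bounded_functional_sub (bounded_functional_ip (Pip_inner P hdt) _).
  apply: (bounded_functional_ip_comp (g := fun y1 => cast e (Ptens x y1)) (k := Pip x x)
           _ (Pip_inner P hrdt)).
    exact: ip_ge0 (Pip_inner P hr) x.
  by move=> y1; rewrite ip_castE Ptens_ip.
- move=> _ [b [c ->]].
  rewrite (castE_pi e (addrA r d t)) Ptens_assoc // !Ptens_ip // unitM // Ptens_ip //.
  by rewrite (ip_tensr_Fprime b hr hd hx hz); ring.
Qed.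

Lemma Ftilde_gen_ortho_unit_tens s t (w : E (s + t)) (z : E t) :
  0 < s -> 0 < t -> Fprime u t z -> Ftilde_gen u (s + t) w ->
  Pip w (Ptens (u s) z) = 0.
Proof.
move=> hs ht hz [r [t' [e [x [y [hr ht' hx hy ->]]]]]].
case: (ltgtP r s) => [r_lt_s | s_lt_r | r_eq_s].
- have [d hd ds] : exists2 d, 0 < d & s = r + d by exists (s - r); rewrite ?subr_gt0 //; ring.
  subst s; have t'_eq : t' = d + t by apply: (addrI r); rewrite e addrA.
  subst t'.
  rewrite unitM // -Ptens_assoc // -(castE_pi e) ip_castEl castE_comp castE_id.
  by rewrite Ptens_ip // hx mul0r.
- have [d hd rd] : exists2 d, 0 < d & r = s + d by exists (r - s); rewrite ?subr_gt0 //; ring.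
  subst r; have t_eq : t = d + t' by apply: (addrI s); rewrite -e addrA.
  subst t.
  by rewrite ip_tensl_unit_tens // hx mul0r.
- subst r; have t'_eq : t' = t by apply: (addrI s).
  subst t'.
  by rewrite castE_id Ptens_ip // hx mul0r.
Qed.

Lemma Ftilde_gen_ortho_tens_unit s t (w : E (s + t)) (z : E s) :
  0 < s -> 0 < t -> Fprime u s z -> Ftilde_gen u (s + t) w ->
  Pip w (Ptens z (u t)) = 0.
Proof.
move=> hs ht hz [r [t' [e [x [y [hr ht' hx hy ->]]]]]].
case: (ltgtP r s) => [r_lt_s | s_lt_r | r_eq_s].
- have [d hd ds] : exists2 d, 0 < d & s = r + d by exists (s - r); rewrite ?subr_gt0 //; ring.
  subst s; have t'_eq : t' = d + t by apply: (addrI r); rewrite e addrA.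
  subst t'.
  by rewrite ip_tensr_tens_unit // hy mul0r.
- have [d hd rd] : exists2 d, 0 < d & r = s + d by exists (r - s); rewrite ?subr_gt0 //; ring.
  subst r; have t_eq : t = d + t' by apply: (addrI s); rewrite -e addrA.
  subst t.
  rewrite ip_castEl unitM // (castE_pi (esym e) (addrA s d t')) Ptens_assoc //.
  by rewrite Ptens_ip // hy mulr0.
- subst r; have t'_eq : t' = t by apply: (addrI s).
  subst t'.
  by rewrite castE_id Ptens_ip // hy mulr0.
Qed.

End ProductSystem.

Theorem mainTheorem14 (R : realType) (P : product_system R)
    (u : forall t : R, PE P t) (hu : normalized_unit u) :
  forall s t : R, 0 < s -> 0 < t ->
    (forall z : PE P t, Fprime u t z -> Fprime u (s + t) (Ptens (u s) z)) /\
    (forall z : PE P s, Fprime u s z -> Fprime u (s + t) (Ptens z (u t))).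
Proof.
move=> s t hs ht; have hst := addr_gt0 hs ht.
have ip_lin := linear_functional_ip (Pip_inner P hst).
have ip_bnd := bounded_functional_ip (Pip_inner P hst).
split=> z hz w hw; apply: (closed_span_vanish (ip_lin _) (ip_bnd _) _ hw).
- by move=> v hv; exact: (Ftilde_gen_ortho_unit_tens hu hs ht hz hv).
- by move=> v hv; exact: (Ftilde_gen_ortho_tens_unit hu hs ht hz hv).
Qed.
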